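(* For $1\le\ell\le n$ let $s_{n,\ell}$ be the number of permutations $\sigma$ of $\{1,\dots,n\}$ avoiding both $1324$ and $2134$ with $\sigma(n)=\ell$. Then \begin{align*} s_{1,1}&=1,\quad s_{2,1}=s_{2,2}=1,\\ s_{n,1}&=s_{n,2}=s_{n,3}=\sum_{m=1}^{n-1}s_{n-1,m}\quad\text{for }n\ge3,\\ s_{n,\ell}&=2s_{n-1,\ell-1}+\sum_{m=\ell}^{n-1}s_{n-1,m}\quad\text{for }4\le\ell\le n. \end{align*}
   Context: A permutation avoids a pattern $p$ if no subsequence of its one-line notation is order-isomorphic to $p$. *)

From mathcomp Require Import all_boot all_fingroup.
(* n = 0 is never used by the statement (it only concerns 1 <= l <= n). *)
Set Implicit Arguments. Unset Strict Implicit. Unset Printing Implicit Defensive.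

(* A permutation of {1..n} is represented by s : 'S_n acting on 'I_n = {0..n-1};
   its one-line notation is s 0, s 1, ..., s (n-1) (values shifted down by 1). *)

Definition contains_pattern (n : nat) (s : 'S_n) (p : seq nat) : bool :=
  [exists f : {ffun 'I_(size p) -> 'I_n},
     [forall a : 'I_(size p), forall b : 'I_(size p),
        ((a < b)%N ==> (f a < f b)%N) &&
        ((s (f a) < s (f b))%N == (nth 0 p a < nth 0 p b)%N)]].

Definition avoids (n : nat) (s : 'S_n) (p : seq nat) : bool :=
  ~~ contains_pattern s p.

Definition snl (n l : nat) : nat :=
  match n with
  | 0 => 0
  | n'.+1 =>
    #|[set s : 'S_n'.+1 | [&& avoids s [:: 1; 3; 2; 4], avoids s [:: 2; 1; 3; 4]
                          & (s ord_max : nat).+1 == l]]|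
  end.

From mathcomp Require Import all_boot all_fingroup zify.
Set Implicit Arguments. Unset Strict Implicit. Unset Printing Implicit Defensive.

(* Deleting the last entry l of a permutation s leaves (after standardization)
   a permutation t, and s avoids 1324 and 2134 iff t does and the entries of t
   smaller than l avoid 132 and 213 (such a pattern followed by l is a 1324 or
   a 2134).  For l <= 3 the second condition is void, so s_{n,l} counts all
   avoiders of length n-1, which by the same decomposition is the sum of the
   s_{n-1,m}.  For l >= 4 delete also the last entry m of t, leaving r.  If
   m >= l the conditions reduce to those counted by s_{n-1,m}.  If m < l they
   say that the word v formed by the entries of r smaller than l-1 avoids 132
   and 213, and that in v the entries smaller than m come after all the others
   and in increasing order.  The latter holds for exactly two values of m: the
   least one, and one more than the last entry of v.  This gives 2 s_{n-1,l-1}. *)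

Section Occurrences.

Variable T : eqType.
Implicit Types (P Q : seq T -> bool) (u v w : seq T).

Fixpoint occurs P w : bool :=
  if w is x :: w' then occurs P w' || occurs (fun u => P (x :: u)) w' else P [::].

Lemma occursP P w : reflect (exists2 u, subseq u w & P u) (occurs P w).
Proof.
elim: w P => [|x w IHw] P.
  by apply: (iffP idP) => [|[u /eqP->]]; first exists [::].
rewrite [occurs _ _]/=.
apply: (iffP orP) => [[/IHw[u uw Pu] | /IHw[u uw Pxu]] | [[|y u] uw Pu]].
- by exists u => //; apply: subseq_trans uw (subseq_cons w x).
- by exists (x :: u); rewrite /= ?eqxx.
- by left; apply/IHw; exists [::]; rewrite ?sub0seq.
move: uw => /=; case: eqP => [<- uw | _ uw]; first by right; apply/IHw; exists u.
by left; apply/IHw; exists (y :: u).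
Qed.

Lemma eq_occurs P Q w : P =1 Q -> occurs P w = occurs Q w.
Proof.
elim: w P Q => [|x w IHw] P Q PQ; first exact: PQ.
by congr (_ || _); apply: IHw => // u; apply: PQ.
Qed.

Lemma occurs_sub P Q w : (forall u, P u -> Q u) -> occurs P w -> occurs Q w.
Proof. by move=> PQ /occursP[u uw Pu]; apply/occursP; exists u; last exact: PQ. Qed.

Lemma occurs_subseq P v w : subseq v w -> occurs P v -> occurs P w.
Proof.
move=> vw /occursP[u uv Pu]; apply/occursP.
by exists u; first exact: subseq_trans vw.
Qed.

Lemma occurs_mem P x w : x \in w -> P [:: x] -> occurs P w.
Proof. by rewrite -sub1seq => xw Px; apply/occursP; exists [:: x]. Qed.

Lemma occurs_rcons P w x :
  occurs P (rcons w x) = occurs P w || occurs (fun u => P (rcons u x)) w.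
Proof.
elim: w P => [|y w IHw] P //=.
by rewrite !IHw -!orbA; congr (_ || _); rewrite orbCA.
Qed.

Lemma occurs_filter P (a : pred T) w :
  occurs P (filter a w) = occurs (fun u => P u && all a u) w.
Proof.
elim: w P => [|x w IHw] P /=; first by rewrite andbT.
case: ifP => ax /=; rewrite !IHw.
  by congr (_ || _); apply: eq_occurs => u /=; rewrite ax.
suff -> : occurs (fun u => P (x :: u) && false) w = false by rewrite orbF.
by apply/negbTE/negP => /occursP[u _]; rewrite andbF.
Qed.

End Occurrences.

Lemma occurs_map (T T' : eqType) (h : T -> T') P w :
  occurs P (map h w) = occurs (fun u => P (map h u)) w.
Proof. by elim: w P => [|x w IHw] P //=; rewrite !IHw. Qed.

Lemma sorted_subset_subseq (T : eqType) (lt : rel T) (s t : seq T) :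
  transitive lt -> irreflexive lt -> sorted lt s -> sorted lt t ->
  {subset s <= t} -> subseq s t.
Proof.
move=> lt_tr lt_irr s_sorted t_sorted st.
rewrite (@irr_sorted_eq _ _ lt_tr lt_irr s [seq x <- t | x \in s]) ?filter_subseq //.
  exact: sorted_filter.
by move=> x; rewrite mem_filter; case: (boolP (x \in s)) => // /st ->.
Qed.

Definition order_iso (p u : seq nat) : bool :=
  (size u == size p) &&
  [forall a : 'I_(size p), forall b : 'I_(size p),
     (nth 0 u a < nth 0 u b) == (nth 0 p a < nth 0 p b)].

Lemma order_iso_nth p u : order_iso p u -> forall i j, i < size p -> j < size p ->
  (nth 0 u i < nth 0 u j) = (nth 0 p i < nth 0 p j).
Proof.
case/andP=> _ /forallP iso i j ip jp.
by have /forallP/(_ (Ordinal jp))/eqP := iso (Ordinal ip).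
Qed.

Lemma order_isoP p u : size u = size p ->
  (forall i j, i < size p -> j < size p ->
     (nth 0 u i < nth 0 u j) = (nth 0 p i < nth 0 p j)) ->
  order_iso p u.
Proof.
move=> sz iso; rewrite /order_iso sz eqxx.
by apply/forallP => i; apply/forallP => j; apply/eqP/iso.
Qed.

Definition ord_lt n (i j : 'I_n) := i < j.

Lemma ord_lt_trans n : transitive (@ord_lt n).
Proof. by move=> j i k; apply: ltn_trans. Qed.

Lemma sorted_enum_ord n : sorted (@ord_lt n) (enum 'I_n).
Proof. by have := iota_ltn_sorted 0 n; rewrite -val_enum_ord sorted_map. Qed.

Definition word n (s : 'S_n) : seq nat := [seq val (s i) | i <- enum 'I_n].

Lemma contains_patternE n (s : 'S_n) p :
  contains_pattern s p = occurs (order_iso p) (word s).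
Proof.
apply/existsP/occursP => [[f /forallP fP] | [u]].
  exists [tuple val (s (f a)) | a < size p].
    change (subseq [seq val (s (f a)) | a <- enum 'I_(size p)] (word s)).
    rewrite (map_comp (fun i => val (s i))); apply: map_subseq.
    apply: sorted_subset_subseq (@ord_lt_trans n) (fun i => ltnn i) _ (sorted_enum_ord n) _.
      apply: homo_sorted (sorted_enum_ord _) => a b ab.
      by have /forallP/(_ b)/andP[/implyP/(_ ab)] := fP a.
    by move=> i; rewrite mem_enum.
  apply: order_isoP => [|i j ip jp]; first by rewrite size_tuple.
  rewrite -[i]/(val (Ordinal ip)) -[j]/(val (Ordinal jp)) !nth_mktuple.
  by have /forallP/(_ (Ordinal jp))/andP[_ /eqP] := fP (Ordinal ip).
case/subseqP => m _ ->; rewrite /word -map_mask; set idx := mask m _.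
case/andP=> /eqP; rewrite size_map => /eqP idx_size /forallP iso.
exists [ffun a => tnth (Tuple idx_size) a]; apply/forallP => a; apply/forallP => b.
have x0 : 'I_n := tnth (Tuple idx_size) a.
have lt_size (c : 'I_(size p)) : c < size idx by rewrite (eqP idx_size).
rewrite !ffunE !(tnth_nth x0) /=; apply/andP; split.
  apply/implyP; apply: (sorted_ltn_nth (@ord_lt_trans n)); rewrite ?inE //.
  exact (sorted_mask (@ord_lt_trans n) m (sorted_enum_ord n)).
by have /forallP/(_ b) := iso a; rewrite !(nth_map x0).
Qed.

Definition pat1324 (u : seq nat) :=
  if u is [:: a; b; c; d] then [&& a < c, c < b & b < d] else false.
Definition pat2134 (u : seq nat) :=
  if u is [:: a; b; c; d] then [&& b < a, a < c & c < d] else false.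
Definition pat132 (u : seq nat) := if u is [:: a; b; c] then a < c < b else false.
Definition pat213 (u : seq nat) := if u is [:: a; b; c] then b < a < c else false.

Lemma order_iso1324 : order_iso [:: 1; 3; 2; 4] =1 pat1324.
Proof.
move=> u; apply/idP/idP => [iso | ].
  have /eqP := (andP iso).1; case: u iso => [|a [|b [|c [|d []]]]] // iso _.
  have E := order_iso_nth iso.
  by move: (E 0 2 isT isT) (E 2 1 isT isT) (E 1 3 isT isT) => /= -> -> ->.
case: u => [|a [|b [|c [|d []]]]] //= /and3P[ac cb bd]; apply: order_isoP => // i j.
by do 4?[case: i => [|i] //]; do 4?[case: j => [|j] //] => /=; lia.
Qed.

Lemma order_iso2134 : order_iso [:: 2; 1; 3; 4] =1 pat2134.
Proof.
move=> u; apply/idP/idP => [iso | ].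
  have /eqP := (andP iso).1; case: u iso => [|a [|b [|c [|d []]]]] // iso _.
  have E := order_iso_nth iso.
  by move: (E 1 0 isT isT) (E 0 2 isT isT) (E 2 3 isT isT) => /= -> -> ->.
case: u => [|a [|b [|c [|d []]]]] //= /and3P[ba ac cd]; apply: order_isoP => // i j.
by do 4?[case: i => [|i] //]; do 4?[case: j => [|j] //] => /=; lia.
Qed.

Lemma ltn_bump2 h i j : (bump h i < bump h j) = (i < j).
Proof. by rewrite !ltnNge leq_bump2. Qed.

Lemma bump_lt_gt h L i : h < L -> (bump h i < L) = (i < L.-1).
Proof. rewrite /bump; case: leqP; lia. Qed.

Lemma bump_lt_le h L i : L <= h -> (bump h i < L) = (i < L).
Proof. rewrite /bump; case: leqP; lia. Qed.

Definition up_across m (u : seq nat) := if u is [:: a; b] then a < m <= b else false.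
Definition down_below m (u : seq nat) := if u is [:: a; b] then b < a < m else false.

Section MonotoneImage.
Variables (h : nat -> nat).
Hypothesis h_mono : {mono h : x y / x < y}.

Lemma pat1324_map u : pat1324 (map h u) = pat1324 u.
Proof. by case: u => [|a [|b [|c [|d []]]]] //=; rewrite !h_mono. Qed.
Lemma pat2134_map u : pat2134 (map h u) = pat2134 u.
Proof. by case: u => [|a [|b [|c [|d []]]]] //=; rewrite !h_mono. Qed.
Lemma pat132_map u : pat132 (map h u) = pat132 u.
Proof. by case: u => [|a [|b [|c []]]] //=; rewrite !h_mono. Qed.
Lemma pat213_map u : pat213 (map h u) = pat213 u.
Proof. by case: u => [|a [|b [|c []]]] //=; rewrite !h_mono. Qed.
End MonotoneImage.

Lemma pat1324_rcons_bump l u :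
  pat1324 (rcons (map (bump l) u) l) = pat132 u && all (gtn l) u.
Proof.
case: u => [|a [|b [|c [|d u]]]] //=; last by case: u.
by rewrite /bump; do 3 case: leqP; lia.
Qed.

Lemma pat2134_rcons_bump l u :
  pat2134 (rcons (map (bump l) u) l) = pat213 u && all (gtn l) u.
Proof.
case: u => [|a [|b [|c [|d u]]]] //=; last by case: u.
by rewrite /bump; do 3 case: leqP; lia.
Qed.

Lemma pat132_rcons_bump m u : pat132 (rcons (map (bump m) u) m) = up_across m u.
Proof.
case: u => [|a [|b [|c u]]] //=; last by case: u.
by rewrite /bump; do 2 case: leqP; lia.
Qed.
Lemma pat213_rcons_bump m u : pat213 (rcons (map (bump m) u) m) = down_below m u.
Proof.
case: u => [|a [|b [|c u]]] //=; last by case: u.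
by rewrite /bump; do 2 case: leqP; lia.
Qed.

Definition avoids_1324_2134 (w : seq nat) := ~~ occurs pat1324 w && ~~ occurs pat2134 w.
Definition avoids_132_213 (v : seq nat) := ~~ occurs pat132 v && ~~ occurs pat213 v.
Definition final_run m (v : seq nat) :=
  ~~ occurs (up_across m) v && ~~ occurs (down_below m) v.

Lemma avoids_1324_2134_rcons l w :
  avoids_1324_2134 (rcons (map (bump l) w) l) =
  avoids_1324_2134 w && avoids_132_213 (filter (gtn l) w).
Proof.
rewrite /avoids_1324_2134 /avoids_132_213 !occurs_rcons !occurs_map !occurs_filter.
rewrite (eq_occurs w (pat1324_map (ltn_bump2 l))) (eq_occurs w (pat2134_map (ltn_bump2 l))).
rewrite (eq_occurs w (pat1324_rcons_bump l)) (eq_occurs w (pat2134_rcons_bump l)).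
by rewrite !negb_or andbACA.
Qed.

Lemma avoids_132_213_rcons m v :
  avoids_132_213 (rcons (map (bump m) v) m) = avoids_132_213 v && final_run m v.
Proof.
rewrite /avoids_132_213 /final_run !occurs_rcons !occurs_map.
rewrite (eq_occurs v (pat132_map (ltn_bump2 m))) (eq_occurs v (pat213_map (ltn_bump2 m))).
rewrite (eq_occurs v (pat132_rcons_bump m)) (eq_occurs v (pat213_rcons_bump m)).
by rewrite !negb_or andbACA.
Qed.

Lemma avoids_132_213_subseq u v : subseq u v -> avoids_132_213 v -> avoids_132_213 u.
Proof.
move=> uv /andP[no132 no213].
by rewrite /avoids_132_213 (contra (occurs_subseq uv) no132) (contra (occurs_subseq uv) no213).
Qed.

Lemma avoids_132_213_filter_mono m L w : m <= L ->
  avoids_132_213 (filter (gtn L) w) -> avoids_132_213 (filter (gtn m) w).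
Proof.
move=> mL; apply: avoids_132_213_subseq.
rewrite (_ : filter (gtn m) w = filter (gtn m) (filter (gtn L) w)) ?filter_subseq //.
by rewrite -filter_predI; apply: eq_filter => x /=; lia.
Qed.

Lemma filter_rcons_bump_lt m L w : m < L ->
  filter (gtn L) (rcons (map (bump m) w) m) = rcons (map (bump m) (filter (gtn L.-1) w)) m.
Proof.
move=> mL; rewrite filter_rcons /= mL filter_map; congr (rcons (map _ _) _).
by apply: eq_filter => x /=; rewrite bump_lt_gt.
Qed.

Lemma filter_rcons_bump_ge m L w : L <= m ->
  filter (gtn L) (rcons (map (bump m) w) m) = filter (gtn L) w.
Proof.
move=> Lm; rewrite filter_rcons /= ltnNge Lm /= filter_map.
rewrite (eq_filter (a2 := gtn L)) => [|x /=]; last by rewrite bump_lt_le.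
apply: map_id_in => x; rewrite mem_filter /bump => /andP[/= xL _]; lia.
Qed.

Definition avoids_with_low L w := avoids_1324_2134 w && avoids_132_213 (filter (gtn L) w).

Lemma avoids_with_low_rcons_lt m L w : m < L ->
  avoids_with_low L (rcons (map (bump m) w) m) =
  avoids_with_low L.-1 w && final_run m (filter (gtn L.-1) w).
Proof.
move=> mL; rewrite /avoids_with_low avoids_1324_2134_rcons.
rewrite filter_rcons_bump_lt // avoids_132_213_rcons.
case: (boolP (avoids_132_213 (filter (gtn L.-1) w))) => [low | ]; last by rewrite !andbF.
by rewrite (avoids_132_213_filter_mono _ low) ?andbT //; lia.
Qed.

Lemma avoids_with_low_rcons_ge m L w : L <= m ->
  avoids_with_low L (rcons (map (bump m) w) m) = avoids_with_low m w.
Proof.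
move=> Lm; rewrite /avoids_with_low avoids_1324_2134_rcons filter_rcons_bump_ge //.
case: (boolP (avoids_132_213 (filter (gtn m) w))) => [low | ]; last by rewrite andbF.
by rewrite (avoids_132_213_filter_mono Lm low) andbT.
Qed.

Lemma final_run0 v : final_run 0 v.
Proof.
by apply/andP; split; apply/negP => /occursP[[|a [|b [|? ?]]] _] //=; rewrite ltn0 ?andbF.
Qed.

Lemma final_run_last v x :
  uniq (rcons v x) -> avoids_132_213 (rcons v x) -> final_run x.+1 (rcons v x).
Proof.
rewrite rcons_uniq => /andP[xNv _] /andP[no132 no213].
have /all_filterP v_id : all (predC1 x) v.
  by apply/allP => y yv; apply: contraNneq xNv => <-.
have extend (P q : seq nat -> bool) :
    (forall u, P u -> all (predC1 x) u -> q (rcons u x)) -> occurs P v -> occurs q (rcons v x).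
  rewrite -{1}v_id occurs_filter occurs_rcons => Pq Pv; apply/orP; right.
  by apply: occurs_sub _ Pv => u /andP[]; apply: Pq.
rewrite /final_run !occurs_rcons !negb_or -!andbA; apply/and4P; split.
- by apply: contra no132; apply: extend => -[|a [|b [|? ?]]] //= *; lia.
- by apply/negP => /occursP[[|a [|b u]] _] //=; [lia | case: u].
- by apply: contra no213; apply: extend => -[|a [|b [|? ?]]] //= *; lia.
- by apply/negP => /occursP[[|a [|b u]] _] //=; [lia | case: u].
Qed.

Lemma final_run_eq_last v x m :
  0 < m -> m.-1 \in rcons v x -> final_run m (rcons v x) -> m = x.+1.
Proof.
move=> m_gt0; rewrite mem_rcons in_cons => /predU1P[mx _ | mv]; first by rewrite -mx prednK.
rewrite /final_run !occurs_rcons !negb_or => /andP[/andP[_ no_up] /andP[_ no_down]].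
case: (ltngtP x m.-1) => [xm | mx | ->]; last by rewrite prednK.
  by case/negP: no_down; apply: occurs_mem mv _ => /=; lia.
by case/negP: no_up; apply: occurs_mem mv _ => /=; lia.
Qed.

Lemma sum_final_run v K : 0 < K -> uniq v -> v =i iota 0 K -> avoids_132_213 v ->
  \sum_(m < K.+1) final_run m v = 2.
Proof.
move=> K_gt0 v_uniq vK v_av.
case/lastP: v v_uniq vK v_av => [|v x] v_uniq vK v_av.
  by move: (vK 0); rewrite mem_iota K_gt0.
have xK : x < K by rewrite -[x < K]/(0 <= x < K) -mem_iota -vK mem_rcons mem_head.
rewrite big_ord_recl final_run0; congr (1 + _); apply/eqP/sum_nat_eq1.
exists (Ordinal xK); split=> // [|j jx _]; first by rewrite /= final_run_last.
apply/eqP; rewrite eqb0; apply: contra jx => run; apply/eqP/val_inj/succn_inj.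
by apply: final_run_eq_last _ _ run; rewrite lift0 // vK mem_iota /=.
Qed.

Lemma word_uniq n (s : 'S_n) : uniq (word s).
Proof. by rewrite map_inj_uniq ?enum_uniq // => i j /val_inj/perm_inj. Qed.

Lemma mem_word n (s : 'S_n) : word s =i iota 0 n.
Proof.
move=> x; rewrite mem_iota /=; apply/mapP/idP => [[i _ ->] | xn]; first exact: ltn_ord.
by exists (s^-1 (Ordinal xn))%g; rewrite ?mem_enum ?permKV.
Qed.

Lemma word_lift_perm n (l : 'I_n.+1) (t : 'S_n) :
  word (lift_perm ord_max l t) = rcons (map (bump l) (word t)) l.
Proof.
rewrite /word enum_ordSr map_rcons lift_perm_id -!map_comp; congr (rcons _ _).
apply: eq_map => i /=; have -> : widen_ord (leqnSn n) i = lift ord_max i.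
  by apply: val_inj; rewrite /= /bump leqNgt ltn_ord.
by rewrite lift_perm_lift.
Qed.

Lemma lift_perm_inj n (i j : 'I_n.+1) : injective (lift_perm i j).
Proof.
move=> s t st; apply/permP => k; apply: (@lift_inj _ j).
by rewrite -!(lift_perm_lift i) st.
Qed.

Lemma lift_perm_surj n (s : 'S_n.+1) : exists t, s = lift_perm ord_max (s ord_max) t.
Proof.
have lift_neq k : s ord_max != s (lift ord_max k).
  by rewrite (inj_eq perm_inj) neq_lift.
pose f k := odflt k (unlift (s ord_max) (s (lift ord_max k))).
have fK k : lift (s ord_max) (f k) = s (lift ord_max k).
  by rewrite /f; case: (unlift_some (lift_neq k)) => k' -> ->.
have f_inj : injective f.
  by move=> k k' /(congr1 (lift (s ord_max))); rewrite !fK => /perm_inj/lift_inj.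
exists (perm f_inj); apply/permP => k; case: (unliftP ord_max k) => [k' | ] ->.
  by rewrite lift_perm_lift permE fK.
by rewrite lift_perm_id.
Qed.

Lemma card_set_sum (T : finType) (P : pred T) : #|[set x | P x]| = \sum_x (P x : nat).
Proof. by rewrite -sum1dep_card big_mkcond. Qed.

Lemma card_lift_perm n (P : pred 'S_n.+1) (l : 'I_n.+1) :
  #|[set s | P s & s ord_max == l]| = #|[set t : 'S_n | P (lift_perm ord_max l t)]|.
Proof.
rewrite -(card_imset _ (@lift_perm_inj n ord_max l)); apply: eq_card => s.
rewrite !inE; apply/andP/imsetP => [[Ps /eqP sl] | [t]].
  by have [t st] := lift_perm_surj s; exists t; rewrite ?inE -sl -st.
by rewrite inE => Pt ->; rewrite lift_perm_id.
Qed.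

Lemma card_perm_by_last n (P : pred 'S_n.+1) :
  #|[set s | P s]| = \sum_(l < n.+1) #|[set t : 'S_n | P (lift_perm ord_max l t)]|.
Proof.
rewrite -sum1_card (partition_big (fun s : 'S_n.+1 => s ord_max) predT) //=.
apply: eq_bigr => l _; rewrite -card_lift_perm -sum1_card.
by apply: eq_bigl => s; rewrite !inE.
Qed.

Lemma avoids_1324_2134_lift_perm n (l : 'I_n.+1) (t : 'S_n) :
  avoids_1324_2134 (word (lift_perm ord_max l t)) = avoids_with_low l (word t).
Proof. by rewrite word_lift_perm avoids_1324_2134_rcons. Qed.

Lemma avoidsE n (s : 'S_n) :
  avoids s [:: 1; 3; 2; 4] && avoids s [:: 2; 1; 3; 4] = avoids_1324_2134 (word s).
Proof.
by rewrite /avoids !contains_patternE (eq_occurs _ order_iso1324) (eq_occurs _ order_iso2134).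
Qed.

Lemma avoids_1324_2134_small w : size w < 4 -> avoids_1324_2134 w.
Proof.
move=> w_small; apply/andP; split; apply/negP => /occursP[u /size_subseq uw].
  by case: u uw => [|a [|b [|c [|d []]]]] //=; lia.
by case: u uw => [|a [|b [|c [|d []]]]] //=; lia.
Qed.

Lemma avoids_132_213_filter_le2 L w : L <= 2 -> avoids_132_213 (filter (gtn L) w).
Proof.
move=> L2; apply/andP; split; apply/negP; rewrite occurs_filter => /occursP[u _].
  by case: u => [|a [|b [|c []]]] //=; lia.
by case: u => [|a [|b [|c []]]] //=; lia.
Qed.

Definition num_av n := #|[set t : 'S_n | avoids_1324_2134 (word t)]|.

Definition num_av_low n L := #|[set t : 'S_n | avoids_with_low L (word t)]|.

Definition num_av_run n K m :=
  #|[set t : 'S_n | avoids_with_low K (word t) && final_run m (filter (gtn K) (word t))]|.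

Lemma snl_num_av_low n l : l <= n -> snl n.+1 l.+1 = num_av_low n l.
Proof.
rewrite -ltnS => ln; rewrite /snl.
rewrite (eq_card (B := [set s | avoids_1324_2134 (word s) & s ord_max == Ordinal ln])).
  by rewrite card_lift_perm; apply: eq_card => t; rewrite !inE avoids_1324_2134_lift_perm.
by move=> s; rewrite !inE andbA avoidsE.
Qed.

Lemma num_av_sum n : num_av n.+1 = \sum_(l < n.+1) num_av_low n l.
Proof.
rewrite /num_av card_perm_by_last; apply: eq_bigr => l _.
by apply: eq_card => t; rewrite !inE avoids_1324_2134_lift_perm.
Qed.

Lemma num_av_low_le2 n L : L <= 2 -> num_av_low n L = num_av n.
Proof.
move=> L2; apply: eq_card => t.
by rewrite !inE /avoids_with_low avoids_132_213_filter_le2 ?andbT.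
Qed.

Lemma num_av_lt4 n : n < 4 -> num_av n = n`!.
Proof.
move=> n4; rewrite -card_Sn; apply: eq_card => t.
by rewrite !inE avoids_1324_2134_small // size_map size_enum_ord.
Qed.

Lemma sum_num_av_run n K : 0 < K <= n -> \sum_(m < K.+1) num_av_run n K m = 2 * num_av_low n K.
Proof.
case/andP=> K_gt0 Kn.
rewrite /num_av_run (eq_bigr _ (fun m _ => card_set_sum _)) exchange_big /=.
rewrite /num_av_low card_set_sum big_distrr; apply: eq_bigr => t _.
case: (boolP (avoids_with_low K (word t))) => [/andP[_ t_av] | _]; last by rewrite big1.
rewrite /= muln1 sum_final_run ?filter_uniq ?word_uniq // => x.
by rewrite mem_filter mem_word !mem_iota /=; apply/idP/idP; lia.
Qed.

Lemma num_av_low_rec n L : 2 <= L <= n.+1 ->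
  num_av_low n.+1 L = 2 * num_av_low n L.-1 + \sum_(L <= m < n.+1) num_av_low n m.
Proof.
case/andP=> L2 Ln; pose F m := if m < L then num_av_run n L.-1 m else num_av_low n m.
rewrite {1}/num_av_low card_perm_by_last.
rewrite (eq_bigr (fun l : 'I_n.+1 => F l)) => [|l _]; last first.
  rewrite /F; case: ltnP => lL; apply: eq_card => t; rewrite !inE word_lift_perm.
    by rewrite avoids_with_low_rcons_lt.
  by rewrite avoids_with_low_rcons_ge.
rewrite -(big_mkord xpredT F) (big_cat_nat (leq0n L) Ln) /=; congr (_ + _).
  rewrite (eq_big_nat _ _ (F2 := num_av_run n L.-1)) => [|m /andP[_ mL]]; last first.
    by rewrite /F mL.
  by rewrite -{1}(ltn_predK L2) big_mkord sum_num_av_run //; lia.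
by apply: eq_big_nat => m /andP[Lm _]; rewrite /F ltnNge Lm.
Qed.

Lemma snl_n_le2 n l : 1 <= l <= n -> n <= 2 -> snl n l = 1.
Proof.
case: n l => [|n] [|l] // ln n2.
rewrite snl_num_av_low ?num_av_low_le2 ?num_av_lt4; try lia.
by case: n {ln} n2 => [|[|]].
Qed.

Lemma sum_snl n : \sum_(1 <= m < n.+2) snl n.+1 m = num_av n.+1.
Proof.
rewrite big_add1 succnK big_mkord num_av_sum; apply: eq_bigr => m _.
by rewrite snl_num_av_low // -ltnS.
Qed.

Lemma snl_l_le3 n l : 1 <= l <= 3 -> 3 <= n -> snl n l = \sum_(1 <= m < n) snl n.-1 m.
Proof.
case: n l => [|[|n]] [|l] // l3 n3.
by rewrite sum_snl snl_num_av_low ?num_av_low_le2 ?num_av_sum //; lia.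
Qed.

Lemma snl_rec n l : 3 <= l <= n -> snl n l = 2 * snl n.-1 l.-1 + \sum_(l <= m < n) snl n.-1 m.
Proof.
move=> /andP[l3 ln].
have [N eN] : exists N, n = N.+2 by exists n.-2; lia.
have [L eL] : exists L, l = L.+2 by exists l.-2; lia.
subst n l; rewrite !succnK !snl_num_av_low ?num_av_low_rec ?big_add1 ?succnK; try lia.
by congr (_ + _); apply: eq_big_nat => m /andP[_ mN]; rewrite snl_num_av_low.
Qed.

Theorem proposition5p1 :
  [/\ snl 1 1 = 1, snl 2 1 = 1, snl 2 2 = 1,
      (forall n, 3 <= n ->
         snl n 1 = \sum_(1 <= m < n) snl n.-1 m /\
         snl n 2 = \sum_(1 <= m < n) snl n.-1 m /\
         snl n 3 = \sum_(1 <= m < n) snl n.-1 m)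
    & (forall n l, 4 <= l <= n ->
         snl n l = 2 * snl n.-1 l.-1 + \sum_(l <= m < n) snl n.-1 m)].
Proof.
split; try by rewrite snl_n_le2.
  by move=> n n3; rewrite !snl_l_le3.
by move=> n l /andP[l4 ln]; rewrite snl_rec // ln andbT ltnW.
Qed.
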